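(* Let $D,K,N\in\mathbb{N}$ and let $\{d_n\}_{n\in\mathbb{N}}$ be a sequence of natural numbers. Writing $D_n=\prod_{i=1}^{n}d_i$, we have $$D^{N+1}\prod_{i=1}^{N}(KD_i+d_i)\geq KDD_N\sum_{n=1}^{N}D^n\prod_{i=1}^{n-1}(KD_i+d_i).$$
   Context: $\mathbb{N}=\{1,2,3,\ldots\}$; empty products equal $1$. *)

From mathcomp Require Import all_boot.
Set Implicit Arguments. Unset Strict Implicit. Unset Printing Implicit Defensive.

Definition Dprod (d : nat -> nat) (n : nat) : nat := \prod_(1 <= i < n.+1) d i.

From mathcomp Require Import all_boot.
From mathcomp Require Import zify.

(* Write P_N for the product on the left and S_N for the sum on the right.
   Dividing out one factor D, the claim is K D_N S_N <= D^N P_N, which follows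
   by induction on N: S_(N+1) = S_N + D^(N+1) P_N and
   P_(N+1) = P_N (K D_N d_(N+1) + d_(N+1)), so the new term of the sum is paid
   for by the K D_(N+1) part of the new factor and the old sum, scaled by
   d_(N+1), by its d_(N+1) part. *)

Lemma DprodS (d : nat -> nat) (n : nat) : Dprod d n.+1 = Dprod d n * d n.+1.
Proof. by rewrite /Dprod big_nat_recr. Qed.

Section WeightedPartialProducts.

Variables (D K : nat) (d : nat -> nat).

Local Notation P N := (\prod_(1 <= i < N.+1) (K * Dprod d i + d i)).
Local Notation S N := (\sum_(1 <= n < N.+1) D ^ n * \prod_(1 <= i < n) (K * Dprod d i + d i)).

Lemma Dprod_mul_sum_le (hD : 0 < D) (N : nat) : K * Dprod d N * S N <= D ^ N * P N.
Proof.
elim: N => [|N IH]; first by rewrite big_geq ?muln0.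
rewrite big_nat_recr //= [P N.+1]big_nat_recr //= DprodS.
have IH_scaled : K * Dprod d N * S N * d N.+1 <= D ^ N.+1 * P N * d N.+1.
  rewrite leq_mul2r; apply/orP; right; apply: leq_trans IH _.
  by rewrite leq_mul2r leq_pexp2l ?leqnSn ?orbT.
nia.
Qed.

End WeightedPartialProducts.

Theorem lemma2p5 (D K N : nat) (d : nat -> nat)
  (hD : 0 < D) (hK : 0 < K) (hN : 0 < N)
  (hd : forall i, 0 < i -> 0 < d i) :
  D ^ N.+1 * \prod_(1 <= i < N.+1) (K * Dprod d i + d i)
  >= K * D * Dprod d N *
     \sum_(1 <= n < N.+1) D ^ n * \prod_(1 <= i < n) (K * Dprod d i + d i).
Proof.
have := leq_mul (leqnn D) (@Dprod_mul_sum_le D K d hD N).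
by rewrite expnS -!mulnA [D * (K * _)]mulnCA [D * (Dprod d N * _)]mulnCA.
Qed.
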